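(* Let $A$ be an integral domain. If the polynomial $a_0+a_1x+\cdots+a_nx^n\in A[x]$ is divisible by $p^m$, where $p\in A[x]$ and $m\in\mathbb{N}$, then for all $z_1,z_2\in\mathbb{Z}$ and every $k\in\mathbb{N}$ with $k\le m$, the polynomial $\sum_{r=0}^n\binom{z_1+z_2r}{k}a_rx^r\in A[x]$ is divisible by $p^{m-k}$.
   Context: $\binom{z}{k}=z(z-1)\cdots(z-k+1)/k!$ for $z\in\mathbb{Z}$, $k\in\mathbb{N}$ (an integer). *)

From HB Require Import structures.
From mathcomp Require Import all_boot all_order all_algebra.
Set Implicit Arguments. Unset Strict Implicit. Unset Printing Implicit Defensive.
Import Order.TTheory GRing.Theory Num.Theory.
Local Open Scope ring_scope.

(* Generalized binomial coefficient binom(z, k) = z(z-1)...(z-k+1)/k!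
   for z : int, k : nat; the division is exact integer division. *)
Definition zbinom (z : int) (k : nat) : int :=
  ((\prod_(i < k) (z - i%:Z)) %/ (k`!)%:Z)%Z.

(* Divisibility in the polynomial ring A[x] (genuine divisibility,
   not polydiv's pseudo-divisibility). *)
Definition poly_dvd (A : idomainType) (p q : {poly A}) : Prop :=
  exists r : {poly A}, q = r * p.

(* Write f = \sum_r a_r x^r.  If p^m divides f, then p^(m-j) divides the
   Hasse derivative f^[j] = \sum_r C(r, j) a_r x^(r-j): expanding
   f(X + Y) = p(X + Y)^m q(X + Y) with p(X + Y) = p(X) + Y (...), the
   coefficient of Y^j is f^[j](X) and lies in p(X)^(m-j) A[X].
   On the other hand r |-> C(z1 + z2 r, k) is an integer combination of the
   C(r, j) with j <= k, because its forward difference is a sum of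
   sequences r |-> C(c + z2 r, k - 1).  Hence the weighted polynomial is
   \sum_(j <= k) c_j x^j f^[j], and each term is divisible by p^(m-k). *)

From HB Require Import structures.
From mathcomp Require Import all_boot all_order all_algebra.
From mathcomp Require Import zify ring.
Set Implicit Arguments.
Unset Strict Implicit.
Unset Printing Implicit Defensive.
Import Order.TTheory GRing.Theory Num.Theory.
Local Open Scope ring_scope.

Section PolyDvd.
Variable A : idomainType.
Implicit Types p q u v w : {poly A}.

Lemma poly_dvd_refl q : poly_dvd q q.
Proof. by exists 1; rewrite mul1r. Qed.

Lemma poly_dvd1 u : poly_dvd 1 u.
Proof. by exists u; rewrite mulr1. Qed.

Lemma poly_dvd_trans q u v : poly_dvd q u -> poly_dvd u v -> poly_dvd q v.
Proof. by move=> [r1 ->] [r2 ->]; exists (r2 * r1); rewrite mulrA. Qed.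

Lemma poly_dvd_mull q u w : poly_dvd q u -> poly_dvd q (w * u).
Proof. by move=> [r ->]; exists (w * r); rewrite mulrA. Qed.

Lemma poly_dvd_mulz q u (c : int) : poly_dvd q u -> poly_dvd q (u *~ c).
Proof. by move=> [r ->]; exists (r *~ c); rewrite mulrzAl. Qed.

Lemma poly_dvd_sum (I : Type) (r : seq I) (P : pred I) (F : I -> {poly A}) q :
  (forall i, P i -> poly_dvd q (F i)) -> poly_dvd q (\sum_(i <- r | P i) F i).
Proof.
move=> dvdF; apply: (big_ind (poly_dvd q)) => //.
- by exists 0; rewrite mul0r.
- by move=> u v [r1 ->] [r2 ->]; exists (r1 + r2); rewrite mulrDl.
Qed.

Lemma poly_dvd_exp2l p i j : (i <= j)%N -> poly_dvd (p ^+ i) (p ^+ j).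
Proof. by move=> le_ij; exists (p ^+ (j - i)); rewrite -exprD subnK. Qed.

End PolyDvd.

Section HasseDerivative.
Variable A : idomainType.
Variable p : {poly A}.

(* Membership of u in the ideal (p, 'X)^m of {poly {poly A}}; for j >= m the
   truncated exponent m - j is 0 and the condition is void. *)
Definition in_pX_ideal_pow (m : nat) (u : {poly {poly A}}) : Prop :=
  forall j, poly_dvd (p ^+ (m - j)) u`_j.

Lemma in_pX_ideal_pow0 u : in_pX_ideal_pow 0 u.
Proof. by move=> j; rewrite sub0n expr0; apply: poly_dvd1. Qed.

Lemma in_pX_ideal_powM i j u v :
  in_pX_ideal_pow i u -> in_pX_ideal_pow j v -> in_pX_ideal_pow (i + j) (u * v).
Proof.
move=> Iu Iv l; rewrite coefM; apply: poly_dvd_sum => s _.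
have [r1 ->] := Iu s; have [r2 ->] := Iv (l - s)%N.
have le_sl : (s <= l)%N by rewrite -ltnS ltn_ord.
exists (r1 * r2 * p ^+ ((i - s) + (j - (l - s)) - (i + j - l))).
by rewrite -mulrA -exprD subnK; [rewrite exprD; ring | lia].
Qed.

Lemma in_pX_ideal_powX m u : in_pX_ideal_pow 1 u -> in_pX_ideal_pow m (u ^+ m).
Proof.
move=> Iu; elim: m => [|m IHm]; first exact: in_pX_ideal_pow0.
by rewrite exprS -add1n; apply: in_pX_ideal_powM.
Qed.

(* taylor g is g(X + Y), with X the constant polynomial 'X%:P and Y = 'X. *)
Definition taylor (g : {poly A}) : {poly {poly A}} := (g^:P^:P).[('X)%:P + 'X].

Lemma coef_taylor g j : (taylor g)`_j = g^`N(j).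
Proof.
have taylorE : taylor g = \poly_(i < size g) g^`N(i).
  rewrite /taylor nderiv_taylor; last exact: mulrC.
  rewrite poly_def !size_map_polyC; apply: eq_bigr => i _.
  rewrite !nderivn_map horner_map /= -/(comp_poly 'X _) comp_polyXr.
  by rewrite mul_polyC.
by rewrite taylorE coef_poly; case: ltnP => // /nderivn_poly0.
Qed.

Lemma taylorM u v : taylor (u * v) = taylor u * taylor v.
Proof. by rewrite /taylor !rmorphM /= hornerM. Qed.

Lemma taylorX u m : taylor (u ^+ m) = taylor u ^+ m.
Proof. by rewrite /taylor !rmorphXn /= horner_exp. Qed.

Lemma taylor_in_pX_ideal : in_pX_ideal_pow 1 (taylor p).
Proof.
case=> [|j]; last by rewrite subSS sub0n expr0; apply: poly_dvd1.
by rewrite coef_taylor nderivn0 expr1; apply: poly_dvd_refl.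
Qed.

Lemma dvd_nderivn m f j :
  poly_dvd (p ^+ m) f -> poly_dvd (p ^+ (m - j)) f^`N(j).
Proof.
move=> [q ->]; rewrite -coef_taylor taylorM taylorX -[m]add0n.
apply: in_pX_ideal_powM; first exact: in_pX_ideal_pow0.
exact/in_pX_ideal_powX/taylor_in_pX_ideal.
Qed.

End HasseDerivative.

Definition ffactz (z : int) (k : nat) : int := \prod_(i < k) (z - i%:Z).

Lemma ffactz_diff k z : ffactz (z + 1) k.+1 - ffactz z k.+1 = k.+1%:Z * ffactz z k.
Proof.
rewrite /ffactz big_ord_recl big_ord_recr.
under eq_bigr => i _ do rewrite lift0 intS addrKA.
by rewrite /= intS; ring.
Qed.

Lemma ffactz_0S k : ffactz 0 k.+1 = 0.
Proof. by rewrite /ffactz big_ord_recl /= subr0 mul0r. Qed.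

Lemma dvdz_fact_ffactz k z : (k`!%:Z %| ffactz z k)%Z.
Proof.
elim: k z => [|k IHk] z; first by rewrite fact0 dvd1z.
have dvd_step (w : int) : (k.+1`!%:Z %| k.+1%:Z * ffactz w k)%Z.
  by rewrite factS PoszM; apply: dvdz_mul.
elim/int_ind: z => [|n IHn|n IHn]; first by rewrite ffactz_0S dvdz0.
  have -> : ffactz n.+1 k.+1 = ffactz n k.+1 + k.+1%:Z * ffactz n k.
    by rewrite -ffactz_diff intS addrC; ring.
  by rewrite rpredD.
have -> : ffactz (- n.+1%:Z) k.+1 = ffactz (- n%:Z) k.+1 - k.+1%:Z * ffactz (- n.+1%:Z) k.
  have -> : - n%:Z = - n.+1%:Z + 1 by rewrite intS; ring.
  by rewrite -ffactz_diff; ring.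
by rewrite rpredB.
Qed.

Lemma zbinomK k z : zbinom z k * k`!%:Z = ffactz z k.
Proof. by rewrite /zbinom divzK //; apply: dvdz_fact_ffactz. Qed.

Lemma zbinom0 z : zbinom z 0 = 1.
Proof. by rewrite /zbinom big_ord0 fact0 divz1. Qed.

Lemma zbinomS k z : zbinom (z + 1) k.+1 = zbinom z k.+1 + zbinom z k.
Proof.
have fact_neq0 : k.+1`!%:Z != 0 by rewrite eqz_nat -lt0n fact_gt0.
apply: (mulIf fact_neq0); rewrite mulrDl !zbinomK.
rewrite factS PoszM mulrA [_ * k.+1%:Z]mulrC -mulrA zbinomK.
by rewrite -ffactz_diff; ring.
Qed.

Lemma zbinom_diff k u (n : nat) :
  zbinom (u + n%:Z) k.+1 - zbinom u k.+1 = \sum_(s < n) zbinom (u + s%:Z) k.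
Proof.
elim: n => [|n IHn]; first by rewrite big_ord0 addr0 subrr.
by rewrite big_ord_recr /= -IHn intS (addrC 1) addrA zbinomS; ring.
Qed.

Definition binom_comb (k : nat) (g : nat -> int) : Prop :=
  exists c : nat -> int, forall r, g r = \sum_(j < k.+1) c j * 'C(r, j)%:Z.

Lemma eq_binom_comb k (g h : nat -> int) :
  g =1 h -> binom_comb k g -> binom_comb k h.
Proof. by move=> eq_gh [c gE]; exists c => r; rewrite -eq_gh. Qed.

Lemma binom_combD k (g h : nat -> int) :
  binom_comb k g -> binom_comb k h -> binom_comb k (fun r => g r + h r).
Proof.
move=> [c gE] [d hE]; exists (fun j => c j + d j) => r.
by rewrite gE hE -big_split; apply: eq_bigr => j _; rewrite mulrDl.
Qed.

Lemma binom_combN k (g : nat -> int) :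
  binom_comb k g -> binom_comb k (fun r => - g r).
Proof.
move=> [c gE]; exists (fun j => - c j) => r.
by rewrite gE -sumrN; apply: eq_bigr => j _; rewrite mulNr.
Qed.

Lemma binom_comb_sum k (n : nat) (g : nat -> nat -> int) :
  (forall s, binom_comb k (g s)) -> binom_comb k (fun r => \sum_(s < n) g s r).
Proof.
move=> comb_g; elim: n => [|n IHn].
  exists (fun=> 0) => r; rewrite big_ord0 big1 // => j _; exact: mul0r.
apply: eq_binom_comb (binom_combD IHn (comb_g n)) => r.
by rewrite big_ord_recr.
Qed.

Lemma binom_comb_cst (c : int) : binom_comb 0 (fun=> c).
Proof. by exists (fun=> c) => r; rewrite big_ord1 bin0 mulr1. Qed.

(* The discrete antiderivative of C(r, j) is C(r, j.+1) (Pascal's rule). *)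
Lemma binom_comb_diff k (g : nat -> int) :
  binom_comb k (fun r => g r.+1 - g r) -> binom_comb k.+1 g.
Proof.
move=> [c dgE]; exists (fun j => if j is j'.+1 then c j' else g 0%N) => r.
rewrite big_ord_recl /= bin0 mulr1.
elim: r => [|r IHr].
  by rewrite big1 ?addr0 // => j _; rewrite bin0n mulr0.
rewrite -[g r.+1](subrK (g r)) dgE IHr addrCA -big_split /=.
congr (_ + _); apply: eq_bigr => j _.
by rewrite add0n /bump leq0n add1n binS PoszD mulrDr addrC.
Qed.

Lemma binom_comb_zbinom k (c d : int) :
  binom_comb k (fun r => zbinom (c + d * r%:Z) k).
Proof.
elim: k c d => [|k IHk] c d.
  by apply: eq_binom_comb (binom_comb_cst 1) => r; rewrite zbinom0.
apply: binom_comb_diff; case: d => n.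
- pose h s r := zbinom ((c + s%:Z) + n%:Z * r%:Z) k.
  apply: eq_binom_comb (binom_comb_sum n (fun s => IHk _ _ : binom_comb k (h s))) => r.
  have -> : c + n%:Z * r.+1%:Z = (c + n%:Z * r%:Z) + n%:Z by rewrite intS; ring.
  by rewrite zbinom_diff; apply: eq_bigr => s _; rewrite /h; congr zbinom; ring.
- pose h s r := zbinom ((c + Negz n + s%:Z) + Negz n * r%:Z) k.
  apply: eq_binom_comb
    (binom_combN (binom_comb_sum n.+1 (fun s => IHk _ _ : binom_comb k (h s)))) => r.
  have -> : c + Negz n * r%:Z = (c + Negz n * r.+1%:Z) + n.+1%:Z.
    by rewrite NegzE intS; ring.
  rewrite -opprB zbinom_diff; congr (- _); apply: eq_bigr => s _.
  by rewrite /h; congr zbinom; rewrite NegzE intS; ring.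
Qed.

Section BinomialWeights.
Variable A : idomainType.
Implicit Types f p : {poly A}.

Lemma coef_Xn_nderivn f j i : ('X^j * f^`N(j))`_i = f`_i *+ 'C(i, j).
Proof.
rewrite coefXnM; case: ltnP => [lt_ij | le_ji]; first by rewrite bin_small.
by rewrite coef_nderivn subnKC.
Qed.

Lemma poly_binom_comb f (N k : nat) (g c : nat -> int) :
  (size f <= N)%N -> (forall r, g r = \sum_(j < k.+1) c j * 'C(r, j)%:Z) ->
  \poly_(i < N) ((g i)%:~R * f`_i) = \sum_(j < k.+1) ('X^j * f^`N(j)) *~ c j.
Proof.
move=> le_fN gE; apply/polyP => i; rewrite coef_poly coef_sum.
under eq_bigr => j _ do rewrite coefMrz coef_Xn_nderivn pmulrn -mulrzA mulrC.
rewrite -mulrz_sumr -gE mulrzl; case: ltnP => // le_Ni.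
by rewrite nth_default ?mul0rz // (leq_trans le_fN le_Ni).
Qed.

Lemma dvd_poly_binom_comb p m k (N : nat) (a : nat -> A) (g : nat -> int) :
  poly_dvd (p ^+ m) (\poly_(i < N) a i) -> binom_comb k g -> (k <= m)%N ->
  poly_dvd (p ^+ (m - k)) (\poly_(i < N) ((g i)%:~R * a i)).
Proof.
set f := \poly_(i < N) a i => dvd_f [c gE] le_km.
have -> : \poly_(i < N) ((g i)%:~R * a i) = \poly_(i < N) ((g i)%:~R * f`_i).
  by apply: eq_poly => i lt_iN; rewrite coef_poly lt_iN.
rewrite (poly_binom_comb (size_poly N a) gE).
apply: poly_dvd_sum => j _; apply/poly_dvd_mulz/poly_dvd_mull.
apply: poly_dvd_trans (dvd_nderivn j dvd_f).
by apply: poly_dvd_exp2l; have := ltn_ord j; lia.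
Qed.

End BinomialWeights.

Unset Implicit Arguments.

Theorem lemma4p1 (A : idomainType) (n : nat) (a : nat -> A)
    (p : {poly A}) (m : nat) :
  poly_dvd (p ^+ m) (\sum_(r < n.+1) (a r)%:P * 'X^r) ->
  forall (z1 z2 : int) (k : nat), (k <= m)%N ->
    poly_dvd (p ^+ (m - k))
      (\sum_(r < n.+1) (((zbinom (z1 + z2 * r%:Z) k)%:~R * a r)%:P * 'X^r)).
Proof.
have polyE (F : nat -> A) : \poly_(r < n.+1) F r = \sum_(r < n.+1) (F r)%:P * 'X^r.
  by rewrite poly_def; apply: eq_bigr => r _; rewrite mul_polyC.
move=> dvd_f z1 z2 k le_km; rewrite -polyE in dvd_f.
by have := dvd_poly_binom_comb dvd_f (binom_comb_zbinom k z1 z2) le_km; rewrite polyE.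
Qed.
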